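(* Let $\mathfrak{f}_1(z)=\sum_{n\ge0}\binom{2n}{n}^2z^n$ and $\mathfrak{f}_2(z)=\sum_{n\ge0}\frac{-1}{2n-1}\binom{2n}{n}^2z^n$. Then $\mathfrak{f}_2\in1+z\mathbb{Z}[[z]]$, and for every prime $p$, $$\mathfrak{f}_{2|p}(z)=P_{2,p}(z)\,(\mathfrak{f}_{1|p}(z))^p\qquad\text{and}\qquad \mathfrak{f}_{2|p}(z)=\frac{P_{1,p}(z)^p}{P_{2,p}(z)^{p-1}}\,\mathfrak{f}_{2|p}(z)^p,$$ where $P_{1,p},P_{2,p}\in\mathbb{F}_p[z]$ are the $p$-truncations of $\mathfrak{f}_1,\mathfrak{f}_2$.
   Context: For $f=\sum a(n)z^n\in\mathbb{Z}[[z]]$, $f_{|p}=\sum(a(n)\bmod p)z^n\in\mathbb{F}_p[[z]]$ and its $p$-truncation is $\sum_{n=0}^{p-1}(a(n)\bmod p)z^n$. *)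

From mathcomp Require Import ssreflect.
From HB Require Import structures.
From mathcomp Require Import all_boot all_order all_algebra.
Set Implicit Arguments. Unset Strict Implicit. Unset Printing Implicit Defensive.
Import Order.TTheory GRing.Theory Num.Theory.
Local Open Scope ring_scope.

Definition fps (R : comNzRingType) := nat -> R.

Definition fps_mul (R : comNzRingType) (f g : fps R) : fps R :=
  fun n => \sum_(i < n.+1) f i * g (n - i)%N.

Definition fps_one (R : comNzRingType) : fps R := fun n => if n == 0%N then 1 else 0.

Definition fps_exp (R : comNzRingType) (f : fps R) (k : nat) : fps R :=
  iter k (fps_mul f) (fps_one R).

Definition fps_of_poly (R : comNzRingType) (P : {poly R}) : fps R := fun n => P`_n.

(* multiplicative inverse of a power series (meaningful when f 0 is a unit):
   b 0 = (f 0)^-1, b n = - (f 0)^-1 * sum_{k=1}^n f k * b (n-k) *)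
Fixpoint fps_inv_coefs (R : comUnitRingType) (f : nat -> R) (n : nat) : seq R :=
  match n with
  | 0 => [:: (f 0%N)^-1]
  | m.+1 => let s := fps_inv_coefs f m in
            rcons s (- (f 0%N)^-1 *
                     \sum_(1 <= k < m.+2) f k * nth 0 s (m.+1 - k)%N)
  end.

Definition fps_inv (R : comUnitRingType) (f : nat -> R) : nat -> R :=
  fun n => nth 0 (fps_inv_coefs f n) n.

Definition f1_coef (n : nat) : int := ('C(n.*2, n) ^ 2)%N%:Z.

Definition f2_coef (n : nat) : rat :=
  (-1) / ((n.*2)%:R - 1) * (('C(n.*2, n) ^ 2)%N)%:R.

Definition red (p : nat) (a : nat -> int) : fps 'F_p :=
  fun n => (a n)%:~R.

Definition ptrunc (p : nat) (a : nat -> int) : {poly 'F_p} :=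
  \poly_(n < p) ((a n)%:~R : 'F_p).

From HB Require Import structures.
From mathcomp Require Import all_boot all_order all_algebra all_field.
From mathcomp Require Import ring zify.
From Stdlib Require Import FunctionalExtensionality.
Set Implicit Arguments. Unset Strict Implicit. Unset Printing Implicit Defensive.
Import GRing.Theory Num.Theory.
Local Open Scope ring_scope.

(* 1. Integrality: (2n-1) divides C(2n,n) for n > 0, so the coefficients of
      f_2 are the integers a(n) = -(C(2n,n)/(2n-1)) * C(2n,n), with a(0) = 1.
   2. Lucas' theorem, proved with the Frobenius identity Q^p = Q(X^p) in
      F_p[X], gives for r < p the digit factorizations
        C(2(r+qp), r+qp) = C(2r,r) C(2q,q)   and   a(r+qp) = a(r) C(2q,q)^2
      modulo p.
   3. Power series are compared through their truncations, which multiply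
      like polynomials modulo X^N.
   4. A "lacunary" sequence s(r+qp) = P_r u(q) over F_p, with P of degree < p,
      is the power series P * u^p (Frobenius again).  This gives
      f_1|p = P_1 f_1|p^p and f_2|p = P_2 f_1|p^p, the first identity; the
      second identity is a formal consequence of these two. *)

Definition cbin n := 'C(n.*2, n).

Lemma cbin_rec m : (m.+1 * cbin m.+1 = 2 * m.*2.+1 * cbin m)%N.
Proof.
have e1 := mul_bin_diag (m.*2.+2) m.
have e2 := mul_bin_diag (m.*2.+1) m.
have sym : 'C(m.*2.+1, m.+1) = 'C(m.*2.+1, m).
  rewrite -{1}(bin_sub (n := m.*2.+1) (m := m)); last by lia.
  by congr 'C(_, _); lia.
rewrite sym /= in e1 e2.
rewrite /cbin (_ : (m.+1).*2 = m.*2.+2); last by lia.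
nia.
Qed.

(* (2n-1) divides C(2n,n), since C(2n,n) = 2n C(2n,n) - (2n-1) C(2n,n). *)
Lemma dvdn_cbin {n} : (0 < n)%N -> (n.*2.-1 %| cbin n)%N.
Proof.
case: n => [//|m] _.
rewrite (_ : (m.+1).*2.-1 = m.*2.+1); last by lia.
have -> : cbin m.+1 = (2 * (m.+1 * cbin m.+1) - m.*2.+1 * cbin m.+1)%N by nia.
apply: dvdn_sub; last exact: dvdn_mulr.
by rewrite cbin_rec; apply/dvdn_mull/dvdn_mulr/dvdn_mull.
Qed.

Definition f2_int n : int :=
  if n == 0%N then 1 else - ((cbin n %/ n.*2.-1) * cbin n)%N%:Z.

Lemma pred_double_natr (R : nzRingType) n : (0 < n)%N ->
  ((n.*2.-1)%:R : R) = (n.*2)%:R - 1.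
Proof. by move=> n_gt0; rewrite -{2}(prednK (n := n.*2)) ?double_gt0 // -natr1 addrK. Qed.

Lemma f2_int_rec (R : comNzRingType) n :
  ((f2_int n)%:~R : R) * ((n.*2)%:R - 1) = - (cbin n)%:R ^+ 2.
Proof.
have [->|n_gt0] := posnP n.
  by rewrite /f2_int /cbin /= bin0 double0 mulr0n sub0r mulrN1 expr1n.
have kE := divnK (dvdn_cbin n_gt0).
rewrite /f2_int gtn_eqF // -pred_double_natr // mulrNz -{2 3}kE !natrM.
ring.
Qed.

Lemma f2_intE n : (f2_int n)%:~R = f2_coef n.
Proof.
have [->|n_gt0] := posnP n.
  by rewrite /f2_coef /f2_int /= bin0 double0 mulr0n sub0r divrr ?unitrN1 // mul1r.
have nz : (n.*2)%:R - 1 != 0 :> rat.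
  by rewrite -pred_double_natr // pnatr_eq0; lia.
apply: (mulIf nz); rewrite f2_int_rec /f2_coef natrX -/(cbin n).
by field.
Qed.

Lemma coef_XaddC1_exp (R : nzRingType) n k :
  ((('X + 1) ^+ n)`_k : R) = ('C(n, k))%:R.
Proof.
elim: n k => [|n IHn] k; first by rewrite expr0 coef1 bin0n; case: k.
rewrite exprSr mulrDr mulr1 coefD coefMX IHn.
by case: k => [|k] /=; rewrite ?add0r ?IHn ?bin0 // binS natrD addrC.
Qed.

Lemma Fp_poly_exp_char p (Q : {poly 'F_p}) : prime p -> Q ^+ p = Q \Po 'X^p.
Proof.
move=> p_pr; have pchar_p : p \in [pchar {poly 'F_p}].
  by rewrite (pchar_poly _ p) pchar_Fp.
elim/poly_ind: Q => [|Q c IHQ]; first by rewrite expr0n gtn_eqF ?prime_gt0 ?comp_poly0.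
rewrite comp_poly_MXaddC -IHQ -!(pFrobenius_autE pchar_p).
rewrite pFrobenius_autD_comm; last exact: mulrC.
rewrite pFrobenius_autM_comm; last exact: mulrC.
by rewrite !pFrobenius_autE -rmorphXn /= (_ : c ^+ p = c) // -{2}(expf_card c) card_Fp.
Qed.

Lemma coef_mul_comp_Xn (R : comNzRingType) p (P Q : {poly R}) j :
  (0 < p)%N -> (size P <= p)%N ->
  (P * (Q \Po 'X^p))`_j = P`_(j %% p) * Q`_(j %/ p).
Proof.
move=> p_gt0 sizeP.
have jmod_lt : (j %% p < j.+1)%N by rewrite ltnS leq_mod.
rewrite coefM (bigD1 (Ordinal jmod_lt)) //= big1 ?addr0.
  have -> : (j - j %% p = j %/ p * p)%N by rewrite {1}(divn_eq j p) addnK.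
  by rewrite coef_comp_poly_Xn // dvdn_mull // mulnK.
move=> i i_neq; have [p_le_i|i_lt_p] := leqP p i.
  by rewrite nth_default ?mul0r // (leq_trans sizeP).
rewrite coef_comp_poly_Xn // ifN ?mulr0 //; apply: contra i_neq => p_dvd.
have i_le_j : (i <= j)%N by rewrite -ltnS ltn_ord.
apply/eqP/val_inj => /=.
have -> : (j %% p = ((j - i) + i) %% p)%N by rewrite subnK.
by rewrite -modnDml (eqP p_dvd) add0n modn_small.
Qed.

Lemma lucas p a b c d : prime p -> (a < p)%N -> (c < p)%N ->
  ('C(a + b * p, c + d * p)%N)%:R = ('C(a, c))%:R * ('C(b, d))%:R :> 'F_p.
Proof.
move=> p_pr a_lt c_lt.
have size_a : (size (('X + 1) ^+ a : {poly 'F_p}) <= p)%N.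
  by rewrite -[1](opprK 1) -polyCN size_exp_XsubC.
rewrite -!(coef_XaddC1_exp 'F_p) exprD exprM Fp_poly_exp_char //.
rewrite coef_mul_comp_Xn ?prime_gt0 // addnC modnMDl divnMDl ?prime_gt0 //.
by rewrite modn_small // divn_small // addn0.
Qed.

Lemma cbin_carry p r q : prime p -> (r < p)%N -> (p <= r.*2)%N ->
  (cbin (r + q * p)%N)%:R = 0 :> 'F_p.
Proof.
move=> p_pr r_lt carry.
have -> : cbin (r + q * p)%N = 'C((r.*2 - p) + q.*2.+1 * p, r + q * p).
  by rewrite /cbin doubleD doubleMl mulSn; congr 'C(_, _); lia.
by rewrite lucas // ?(bin_small (n := r.*2 - p)) ?mul0r //; lia.
Qed.

Lemma cbin_lucas p r q : prime p -> (r < p)%N ->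
  (cbin (r + q * p)%N)%:R = (cbin r)%:R * (cbin q)%:R :> 'F_p.
Proof.
move=> p_pr r_lt; have [no_carry|carry] := ltnP r.*2 p.
  by rewrite /cbin doubleD doubleMl lucas.
by rewrite cbin_carry // -[r]addn0 -(mul0n p) cbin_carry ?mul0r.
Qed.

Lemma f2_int_pos (R : nzRingType) n : (0 < n)%N ->
  ((f2_int n)%:~R : R) = - ((cbin n %/ n.*2.-1)%:R * (cbin n)%:R).
Proof. by case: n => [//|n] _; rewrite /f2_int /= mulrNz -natrM. Qed.

(* Digit factorization of a(n) mod p: a(r + qp) = a(r) C(2q,q)^2.  When
   2r-1 is invertible mod p this follows from (2n-1) a(n) = -C(2n,n)^2;
   otherwise 2r-1 = p, so 2r carries and both sides vanish. *)
Lemma f2_int_lucas p r q : prime p -> (r < p)%N ->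
  ((f2_int (r + q * p)%N)%:~R : 'F_p) = (f2_int r)%:~R * (cbin q)%:R ^+ 2.
Proof.
move=> p_pr r_lt.
have same_den : (((r + q * p)%N.*2)%:R - 1 : 'F_p) = (r.*2)%:R - 1.
  by rewrite doubleD doubleMl natrD natrM pchar_Fp_0 // mulr0 addr0.
have [den0|den_neq0] := eqVneq ((r.*2)%:R - 1 : 'F_p) 0; last first.
  apply: (mulIf den_neq0); rewrite -{1}same_den !f2_int_rec cbin_lucas //.
  by rewrite mulrAC f2_int_rec exprMn mulNr.
have r_gt0 : (0 < r)%N.
  by case: r {r_lt same_den} den0 => // /eqP; rewrite double0 sub0r oppr_eq0 oner_eq0.
have carry : (p <= r.*2)%N.
  rewrite leqNgt; apply/negP => no_carry; move: den0.
  rewrite -pred_double_natr // => /eqP; rewrite -(dvdn_pcharf (pchar_Fp p_pr)).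
  by move/dvdn_leq; lia.
have vanish_r := cbin_carry 0 p_pr r_lt carry; rewrite mul0n addn0 in vanish_r.
rewrite !f2_int_pos ?addn_gt0 ?r_gt0 // (cbin_carry q p_pr r_lt carry) vanish_r.
by rewrite !(mulr0, mul0r, oppr0).
Qed.

(* The truncation of a
   product of series is the truncated product of the truncations, so series
   identities can be checked in R[X]/(X^N) for every N. *)
Section Truncation.
Variable R : comNzRingType.
Implicit Types (f g : fps R) (X Y : {poly R}).

Definition trunc N f : {poly R} := \poly_(i < N) f i.

Definition approx N f X : Prop := trunc N f = take_poly N X.

Lemma take_polyM N X Y :
  take_poly N (take_poly N X * take_poly N Y) = take_poly N (X * Y).
Proof.
apply/polyP => i; rewrite !coef_take_poly; case: ltnP => // i_lt.
rewrite !coefM; apply: eq_bigr => k _; rewrite !coef_take_poly.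
by rewrite !ifT //; have := ltn_ord k; lia.
Qed.

Lemma take_poly_congrM N X X' Y Y' : take_poly N X = take_poly N X' ->
  take_poly N Y = take_poly N Y' -> take_poly N (X * Y) = take_poly N (X' * Y').
Proof. by move=> eX eY; rewrite -take_polyM eX eY take_polyM. Qed.

Lemma take_poly_congrX N X X' k : take_poly N X = take_poly N X' ->
  take_poly N (X ^+ k) = take_poly N (X' ^+ k).
Proof.
move=> eX; elim: k => [|k IHk]; first by rewrite !expr0.
by rewrite !exprS; apply: take_poly_congrM.
Qed.

Lemma approx_trunc N f : approx N f (trunc N f).
Proof. by rewrite /approx take_poly_id // size_poly. Qed.

Lemma approx_poly N P : approx N (fps_of_poly P) P.
Proof. by []. Qed.

Lemma approx_one N : approx N (fps_one R) 1.
Proof.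
apply/polyP => i; rewrite coef_poly coef_take_poly coef1 /fps_one.
by case: ltnP => // _; case: (i == 0%N).
Qed.

Lemma approx_mul N f g X Y :
  approx N f X -> approx N g Y -> approx N (fps_mul f g) (X * Y).
Proof.
rewrite /approx -take_polyM => <- <-; apply/polyP => i.
rewrite coef_poly coef_take_poly; case: ltnP => // i_lt.
rewrite coefM; apply: eq_bigr => k _; have := ltn_ord k.
by rewrite !coef_poly => k_le; rewrite !ifT //; lia.
Qed.

Lemma approx_exp N f X k : approx N f X -> approx N (fps_exp f k) (X ^+ k).
Proof.
move=> fX; elim: k => [|k IHk]; first exact: approx_one.
by rewrite exprS; apply: approx_mul.
Qed.

Lemma approx_congr N f X Y :
  take_poly N X = take_poly N Y -> approx N f X -> approx N f Y.
Proof. by rewrite /approx => ->. Qed.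

Lemma fps_eq_approx f g :
  (forall N, exists2 X, approx N f X & approx N g X) -> f = g.
Proof.
move=> common; apply: functional_extensionality => n.
have [X fX gX] := common n.+1.
have := congr1 (fun Q : {poly R} => Q`_n) (etrans fX (esym gX)).
by rewrite /= !coef_poly ltnSn.
Qed.

End Truncation.

Lemma fps_exp0 (R : comNzRingType) (f : fps R) k : fps_exp f k 0%N = f 0%N ^+ k.
Proof.
elim: k => [|k IHk]; first by rewrite expr0.
by rewrite exprS -IHk /fps_exp /= /fps_mul big_ord1.
Qed.

Section Inverse.
Variable R : comUnitRingType.
Implicit Types f : fps R.

Lemma size_fps_inv_coefs f n : size (fps_inv_coefs f n) = n.+1.
Proof. by elim: n => [//|n IHn] /=; rewrite size_rcons IHn. Qed.

Lemma nth_fps_inv_coefs f n j :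
  (j <= n)%N -> nth 0 (fps_inv_coefs f n) j = fps_inv f j.
Proof.
elim: n => [|n IHn] j_le; first by move: j_le; rewrite leqn0 => /eqP->.
case: ltngtP j_le => // [j_lt _|-> _ //].
by rewrite /= nth_rcons size_fps_inv_coefs j_lt IHn.
Qed.

Lemma fps_invS f m : fps_inv f m.+1 =
  - (f 0%N)^-1 * \sum_(1 <= k < m.+2) f k * fps_inv f (m.+1 - k).
Proof.
rewrite /fps_inv /= nth_rcons size_fps_inv_coefs ltnn eqxx.
congr (_ * _); rewrite !big_nat; apply: eq_bigr => k k_in.
by rewrite nth_fps_inv_coefs //; lia.
Qed.

Lemma fps_mul_inv f : f 0%N \is a GRing.unit -> fps_mul f (fps_inv f) = fps_one R.
Proof.
move=> f0_unit; apply: functional_extensionality => -[|m].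
  by rewrite /fps_mul big_ord1 subnn /fps_inv /= mulrV.
rewrite /fps_mul big_ord_recl /= subn0 fps_invS mulrA mulrN mulrV // mulN1r.
by rewrite big_add1 /= big_mkord addNr.
Qed.

Lemma approx_inv N f X : f 0%N \is a GRing.unit -> approx N f X ->
  take_poly N (X * trunc N (fps_inv f)) = take_poly N 1.
Proof.
move=> f0_unit fX; have := approx_mul fX (approx_trunc N (fps_inv f)).
by rewrite /approx fps_mul_inv // approx_one.
Qed.

End Inverse.

(* A series over F_p whose coefficients factor along base-p digits through a
   polynomial P of degree < p is P times a p-th power (Frobenius). *)
Lemma lacunary_fps p (s u : fps 'F_p) (P : {poly 'F_p}) :
  prime p -> (size P <= p)%N ->
  (forall j, s j = P`_(j %% p) * u (j %/ p)%N) ->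
  s = fps_mul (fps_of_poly P) (fps_exp u p).
Proof.
move=> p_pr sizeP s_digits; apply: fps_eq_approx => N.
exists (P * trunc N u ^+ p); last exact/approx_mul/approx_exp/approx_trunc.
apply/polyP => j; rewrite coef_poly coef_take_poly; case: ltnP => // j_lt.
rewrite Fp_poly_exp_char // coef_mul_comp_Xn ?prime_gt0 // s_digits coef_poly.
by rewrite (leq_ltn_trans (div.leq_div j p)).
Qed.

Lemma red_lacunary p (a b : nat -> int) : prime p ->
  (forall r q, (r < p)%N ->
     ((a (r + q * p)%N)%:~R : 'F_p) = (a r)%:~R * (b q)%:~R) ->
  forall j, red p a j = (ptrunc p a)`_(j %% p) * red p b (j %/ p)%N.
Proof.
move=> p_pr a_digits j; have p_gt0 := prime_gt0 p_pr.
by rewrite /red {1}(divn_eq j p) addnC a_digits ?ltn_pmod // coef_poly ltn_pmod.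
Qed.

(* If f1 = P1 f1^k and f2 = P2 f1^k, with P2(0) a unit, then
   f2 = P1^k / P2^(k-1) * f2^k:  indeed P1^k f2^k = P2^k (P1 f1^k)^k
   = P2^(k-1) (P2 f1^k) = P2^(k-1) f2. *)
Lemma fps_second_identity (R : comUnitRingType) k (f1 f2 : fps R)
    (P1 P2 : {poly R}) :
  (0 < k)%N -> P2`_0 \is a GRing.unit ->
  f1 = fps_mul (fps_of_poly P1) (fps_exp f1 k) ->
  f2 = fps_mul (fps_of_poly P2) (fps_exp f1 k) ->
  f2 = fps_mul (fps_mul (fps_exp (fps_of_poly P1) k)
                        (fps_inv (fps_exp (fps_of_poly P2) k.-1)))
               (fps_exp f2 k).
Proof.
move=> k_gt0 P20_unit eq1 eq2; set G := fps_exp (fps_of_poly P2) k.-1.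
have G0_unit : G 0%N \is a GRing.unit by rewrite /G fps_exp0 unitrX.
apply: fps_eq_approx => N; set F1 := trunc N f1; set J := trunc N (fps_inv G).
have f2_approx : approx N f2 (P2 * F1 ^+ k).
  by rewrite eq2; exact/approx_mul/approx_exp/approx_trunc.
exists (P2 * F1 ^+ k) => //.
have F1_fixed : take_poly N (P1 * F1 ^+ k) = take_poly N F1.
  have := approx_trunc N f1; rewrite /approx {1}eq1 => <-.
  exact/esym/approx_mul/approx_exp/approx_trunc.
have J_inv : take_poly N (P2 ^+ k.-1 * J) = take_poly N 1.
  exact/approx_inv/approx_exp.
apply: (approx_congr _ (approx_mul (approx_mul (approx_exp k (approx_poly N P1))
  (approx_trunc N (fps_inv G))) (approx_exp k f2_approx))).
have -> : P1 ^+ k * J * (P2 * F1 ^+ k) ^+ k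
          = (P2 ^+ k.-1 * J) * (P2 * (P1 * F1 ^+ k) ^+ k).
  by rewrite !exprMn -{2}(prednK k_gt0) exprS; ring.
rewrite (take_poly_congrM J_inv (take_poly_congrM (erefl (take_poly N P2))
  (take_poly_congrX k F1_fixed))).
by rewrite mul1r.
Qed.

Lemma red_f1 p n : red p f1_coef n = (cbin n)%:R ^+ 2 :> 'F_p.
Proof. by rewrite /red /f1_coef -natrX. Qed.

Theorem mainTheorem14 :
  exists a : nat -> int,
    (forall n, (a n)%:~R = f2_coef n :> rat) /\ a 0%N = 1 /\
    forall p : nat, prime p ->
      let f1p := red p f1_coef in
      let f2p := red p a in
      let P1 := ptrunc p f1_coef in
      let P2 := ptrunc p a in
      f2p = fps_mul (fps_of_poly P2) (fps_exp f1p p) /\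
      f2p = fps_mul (fps_mul (fps_exp (fps_of_poly P1) p)
                             (fps_inv (fps_exp (fps_of_poly P2) p.-1)))
                    (fps_exp f2p p).
Proof.
exists f2_int; split; first exact: f2_intE.
split=> // p p_pr f1p f2p P1 P2.
have f1_digits : forall j, f1p j = P1`_(j %% p) * f1p (j %/ p)%N.
  apply: red_lacunary => // r q r_lt.
  by rewrite -!/(red p f1_coef _) !red_f1 cbin_lucas // exprMn.
have f2_digits : forall j, f2p j = P2`_(j %% p) * f1p (j %/ p)%N.
  by apply: red_lacunary => // r q r_lt; rewrite -/(red p f1_coef q) red_f1 f2_int_lucas.
have first_id := lacunary_fps p_pr (size_poly _ _) f2_digits.
split=> //; apply: fps_second_identity first_id.
- exact: prime_gt0.
- by rewrite coef_poly prime_gt0 // unitr1.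
- exact: lacunary_fps p_pr (size_poly _ _) f1_digits.
Qed.
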